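(* For every $n\geq 1$ and every $w\in\{0,1\}^n$, there is a prenex first-order sentence over $\tau_{\mathsf{string}}$ with $3\lceil \log_3 n\rceil$ quantifiers, whose quantifier prefix consists of $\lceil\log_3 n\rceil$ consecutive blocks $\exists\exists\forall$, that is true in $\mathbf{B}_w$ and false in $\mathbf{B}_{w'}$ for every $w'\in\{0,1\}^n\setminus\{w\}$.
   Context: Vocabulary $\tau_{\mathsf{string}}=\langle <, S;\ \mathsf{min},\mathsf{max}\rangle$ with $<$ binary, $S$ unary, $\mathsf{min},\mathsf{max}$ constants. A string $w=w_1\cdots w_n\in\{0,1\}^n$ ($n\geq 1$) is encoded by the structure $\mathbf{B}_w$ with universe $\{1,\dots,n\}$, $<$ the usual order, $S=\{i: w_i=1\}$, $\mathsf{min}=1$, $\mathsf{max}=n$. The number of quantifiers is the number of quantifier occurrences. *)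

From mathcomp Require Import all_boot.
Set Implicit Arguments. Unset Strict Implicit. Unset Printing Implicit Defensive.

Inductive term : Type :=
| TVar : nat -> term
| TMin : term
| TMax : term.

Inductive formula : Type :=
| FLt  : term -> term -> formula
| FS   : term -> formula
| FEq  : term -> term -> formula
| FNot : formula -> formula
| FAnd : formula -> formula -> formula
| FOr  : formula -> formula -> formula
| FImp : formula -> formula -> formula
| FEx  : nat -> formula -> formula
| FAll : nat -> formula -> formula.

Definition term_fv (t : term) : seq nat :=
  match t with TVar x => [:: x] | _ => [::] end.

Fixpoint fv (f : formula) : seq nat :=
  match f with
  | FLt s t | FEq s t => term_fv s ++ term_fv t
  | FS t => term_fv t
  | FNot g => fv g
  | FAnd g h | FOr g h | FImp g h => fv g ++ fv h
  | FEx x g | FAll x g => filter (fun y => y != x) (fv g)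
  end.

Definition sentence (f : formula) : Prop := fv f = [::].

Fixpoint qcount (f : formula) : nat :=
  match f with
  | FLt _ _ | FEq _ _ | FS _ => 0
  | FNot g => qcount g
  | FAnd g h | FOr g h | FImp g h => qcount g + qcount h
  | FEx _ g | FAll _ g => (qcount g).+1
  end.

Inductive quant : Type := QEx | QAll.

Fixpoint qprefix (f : formula) : seq quant :=
  match f with
  | FEx _ g => QEx :: qprefix g
  | FAll _ g => QAll :: qprefix g
  | _ => [::]
  end.

Fixpoint matrix (f : formula) : formula :=
  match f with
  | FEx _ g | FAll _ g => matrix g
  | _ => f
  end.

Definition qfree (f : formula) : Prop := qcount f = 0.

Definition prenex (f : formula) : Prop := qfree (matrix f).

(* Semantics in B_w: universe {1..n}, n = size w, S = {i | w_i = 1},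
   min = 1, max = n, with w_i = nth false w (i-1). *)
Definition upd (a : nat -> nat) (x i : nat) : nat -> nat :=
  fun y => if y == x then i else a y.

Definition teval (w : seq bool) (a : nat -> nat) (t : term) : nat :=
  match t with
  | TVar x => a x
  | TMin => 1
  | TMax => size w
  end.

Fixpoint sat (w : seq bool) (a : nat -> nat) (f : formula) : Prop :=
  match f with
  | FLt s t => teval w a s < teval w a t
  | FS t => let i := teval w a t in (1 <= i <= size w) /\ nth false w i.-1 = true
  | FEq s t => teval w a s = teval w a t
  | FNot g => ~ sat w a g
  | FAnd g h => sat w a g /\ sat w a h
  | FOr g h => sat w a g \/ sat w a h
  | FImp g h => sat w a g -> sat w a h
  | FEx x g => exists i, (1 <= i <= size w) /\ sat w (upd a x i) g
  | FAll x g => forall i, (1 <= i <= size w) -> sat w (upd a x i) g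
  end.

(* truth of a sentence in B_w (the assignment is irrelevant for sentences) *)
Definition holds (w : seq bool) (f : formula) : Prop := sat w (fun _ => 1) f.

(* ceil(log_3 n) for n >= 1 is up_log 3 n (smallest e with n <= 3^e) *)
Definition ceil_log3 (n : nat) : nat := up_log 3 n.

From mathcomp Require Import all_boot zify.
From Stdlib Require Import Classical.

(* The sentence is (exists u, exists v, forall z)^k applied to a
   quantifier-free matrix.  Its level-k part expresses that the factor of w
   between two positions p and q spells a given word t of length at most 3^k:
   guess cut points u <= v splitting t into three pieces of length at most
   3^(k-1), and recurse, for the universally chosen z, only on the piece whose
   interval (p,u], (u,v] or (v,q] contains z.  These intervals are disjoint, so
   the witnesses of the inner blocks may depend on z and a single block of
   three quantifiers per level serves all three recursive calls.  The first
   letter of w is tested at min, the remaining n - 1 < 3^k letters by the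
   level-k formula between min and max, with k = ceil(log_3 n). *)

Section Spells.
Context {T : Type}.
Implicit Types (w t : seq T) (x y z : nat).

(* [spells w t x y]: the letters of w at the 1-based positions x+1, ..., y
   form the word t. *)
Definition spells w t x y := x <= y <= size w /\ take (y - x) (drop x w) = t.

Lemma size_spells {w t x y} : spells w t x y -> x + size t = y.
Proof. by case=> /andP[xy yw] <-; rewrite size_takel ?size_drop; lia. Qed.

Lemma spells_nil w x y : spells w [::] x y <-> x = y /\ y <= size w.
Proof.
split=> [sp | [-> yw]]; last by rewrite /spells leqnn subnn take0.
by have := size_spells sp; case: sp => /andP[_ yw] _; rewrite addn0.
Qed.

Lemma spells1 (x0 : T) w c x y :
  spells w [:: c] x y <-> [/\ y = x.+1, y <= size w & nth x0 w x = c].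
Proof.
split=> [sp | [-> yw <-]].
  have yE : y = x.+1 by rewrite -(size_spells sp) addn1.
  case: sp => /andP[_ yw]; rewrite yE subSnn (drop_nth x0) -?yE //= take0.
  by case=> <-.
by rewrite /spells leqnSn yw subSnn (drop_nth x0) //= take0.
Qed.

Lemma spells_cat w t1 t2 x z :
  spells w (t1 ++ t2) x z <-> exists2 y, spells w t1 x y & spells w t2 y z.
Proof.
have take_split y : x <= y <= z ->
    take (z - x) (drop x w) = take (y - x) (drop x w) ++ take (z - y) (drop y w).
  move=> /andP[xy yz]; have -> : drop y w = drop (y - x) (drop x w).
    by rewrite drop_drop subnK.
  by rewrite -takeD; congr take; lia.
split=> [sp | [y [/andP[xy yw] E1] [/andP[yz zw] E2]]]; last first.
  by split; [lia | rewrite (take_split y) ?E1 ?E2 //; lia].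
have sz := size_spells sp; rewrite size_cat in sz.
case: sp => /andP[xz zw]; rewrite (take_split (x + size t1)); last lia.
have szA : size (take (x + size t1 - x) (drop x w)) = size t1.
  by rewrite size_takel ?size_drop; lia.
move=> E; exists (x + size t1); split; try lia.
- by move: (congr1 (take (size t1)) E); rewrite !take_size_cat.
- by move: (congr1 (drop (size t1)) E); rewrite !drop_size_cat.
Qed.

Lemma spells_behead w t : 0 < size w -> spells w t 1 (size w) <-> behead w = t.
Proof.
move=> w_gt0; rewrite /spells w_gt0 leqnn drop1 subn1 -size_behead take_size.
by split=> [[]|].
Qed.

End Spells.

Definition uvar k := 3 * k.
Definition vvar k := (3 * k).+1.
Definition zvar k := (3 * k).+2.

Fixpoint blocks (k : nat) (f : formula) : formula :=
  if k is k'.+1 then FEx (uvar k) (FEx (vvar k) (FAll (zvar k) (blocks k' f)))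
  else f.

Definition letter_fm (c : bool) (t : term) : formula :=
  if c then FS t else FNot (FS t).

Definition ord_fm (s : seq bool) (p q : term) : formula :=
  if s is [::] then FEq p q else FLt p q.

Definition between_fm (z : nat) (p q : term) : formula :=
  FAnd (FLt p (TVar z)) (FNot (FLt q (TVar z))).

Fixpoint spells_fm (k : nat) (t : seq bool) (p q : term) : formula :=
  match k with
  (* Under the guard p < zvar 1 <= q of the enclosing block, [zvar 1 = q]
     forces q = p + 1. *)
  | 0 => if t is c :: _ then FAnd (FEq (TVar (zvar 1)) q) (letter_fm c q)
         else FEq p q
  | k'.+1 =>
    let t1 := take (3 ^ k') t in
    let t2 := take (3 ^ k') (drop (3 ^ k') t) in
    let t3 := drop (3 ^ k' + 3 ^ k') t in
    let u := TVar (uvar k) in let v := TVar (vvar k) in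
    FAnd (FAnd (ord_fm t1 p u) (FAnd (ord_fm t2 u v) (ord_fm t3 v q)))
      (FAnd (FImp (between_fm (zvar k) p u) (spells_fm k' t1 p u))
        (FAnd (FImp (between_fm (zvar k) u v) (spells_fm k' t2 u v))
              (FImp (between_fm (zvar k) v q) (spells_fm k' t3 v q))))
  end.

Definition word_fm (k : nat) (w : seq bool) : formula :=
  blocks k (FAnd (letter_fm (head false w) TMin) (spells_fm k (behead w) TMin TMax)).

Lemma qcount_blocks k f : qcount (blocks k f) = 3 * k + qcount f.
Proof. by elim: k => //= k ->; lia. Qed.

Lemma qprefix_blocks k f :
  qprefix (blocks k f) = flatten (nseq k [:: QEx; QEx; QAll]) ++ qprefix f.
Proof. by elim: k => //= k ->. Qed.

Lemma matrix_blocks k f : matrix (blocks k f) = matrix f.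
Proof. by elim: k. Qed.

Lemma qcount_letter_fm c t : qcount (letter_fm c t) = 0.
Proof. by case: c. Qed.

Lemma qcount_ord_fm s p q : qcount (ord_fm s p q) = 0.
Proof. by case: s. Qed.

Lemma qcount_spells_fm k t p q : qcount (spells_fm k t p q) = 0.
Proof.
elim: k t p q => [|k IH] t p q /=; last by rewrite !qcount_ord_fm !IH.
by case: t => [|c t] //=; rewrite qcount_letter_fm.
Qed.

Definition bound_var (k y : nat) : bool := 3 <= y < 3 * k + 3.

Lemma fv_blocks k f : fv (blocks k f) = [seq y <- fv f | ~~ bound_var k y].
Proof.
elim: k => [|k IH] /=.
  rewrite -[LHS]filter_predT; apply: eq_filter => y.
  by apply/esym/negP; rewrite /bound_var /=; lia.
rewrite IH -!filter_predI; apply: eq_filter => y /=.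
rewrite /bound_var /uvar /vvar /zvar; apply/idP/idP; lia.
Qed.

Lemma fv_letter_fm c t : fv (letter_fm c t) = term_fv t.
Proof. by case: c. Qed.

Lemma fv_ord_fm s p q : fv (ord_fm s p q) = term_fv p ++ term_fv q.
Proof. by case: s. Qed.

Lemma fv_spells_fm k t p q (V : pred nat) :
  {subset term_fv p <= V} -> {subset term_fv q <= V} ->
  (forall y, bound_var (maxn k (t != [::])) y -> V y) ->
  all V (fv (spells_fm k t p q)).
Proof.
elim: k t p q => [|k IH] t p q Vp Vq Vb.
  case: t Vb => [|c t] Vb /=; rewrite all_cat; first by rewrite !(introT allP).
  by rewrite fv_letter_fm Vb // (introT allP Vq).
have {}Vb y : bound_var k.+1 y -> V y.
  by move=> yk; apply: Vb; move: yk; rewrite /bound_var; case: (t != [::]) => /=; lia.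
have [Vu Vv Vz] : [/\ V (uvar k.+1), V (vvar k.+1) & V (zvar k.+1)].
  by split; apply: Vb; rewrite /bound_var /uvar /vvar /zvar; lia.
have Vvar x : V x -> {subset term_fv (TVar x) <= V} by move=> Vx y; rewrite inE => /eqP->.
have [Vu' Vv'] := (Vvar _ Vu, Vvar _ Vv).
have IH' t' p' q' : {subset term_fv p' <= V} -> {subset term_fv q' <= V} ->
    all V (fv (spells_fm k t' p' q')).
  move=> Vp' Vq'; apply: IH => // y yk; apply: Vb.
  by move: yk; rewrite /bound_var; case: (t' != [::]) => /=; lia.
by rewrite /= !fv_ord_fm !all_cat /= !all_cat /= !all_cat Vu Vv Vz
  (introT allP Vp) (introT allP Vq) !IH' //= Vz.
Qed.

Definition agree (k : nat) (a b : nat -> nat) := forall y, 3 * k + 3 <= y -> a y = b y.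

Lemma agree_trans {k a b c} : agree k a b -> agree k b c -> agree k a c.
Proof. by move=> ab bc y yk; rewrite ab ?bc. Qed.

Lemma agreeS {k a b} : agree k a b -> agree k.+1 a b.
Proof. by move=> ab y yk; apply: ab; lia. Qed.

Lemma agree_upd k a y i : y < 3 * k + 3 -> agree k a (upd a y i).
Proof. by move=> yk x xk; rewrite /upd ifN_eq //; apply/eqP; lia. Qed.

Lemma agree_uv k a i j : agree k.+1 a (upd (upd a (uvar k.+1) i) (vvar k.+1) j).
Proof.
apply: agree_trans (agree_upd _ _ _ _ _); last by rewrite /vvar; lia.
by apply: agree_upd; rewrite /uvar; lia.
Qed.

Lemma agree_block k a i j l :
  agree k.+1 a (upd (upd (upd a (uvar k.+1) i) (vvar k.+1) j) (zvar k.+1) l).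
Proof.
by apply: agree_trans (agree_uv _ _ _ _) (agree_upd _ _ _ _ _); rewrite /zvar; lia.
Qed.

Lemma upd_same (a : nat -> nat) x i : upd a x i x = i.
Proof. by rewrite /upd eqxx. Qed.

(* Terms unaffected by the quantifiers of [blocks k] and by the guard variable
   [zvar k.+1] of the enclosing block. *)
Definition endpoint (k : nat) (t : term) : bool :=
  if t is TVar x then (3 * k + 3 <= x) && (x %% 3 != 2) else true.

Lemma endpointS k t : endpoint k.+1 t -> endpoint k t.
Proof. by case: t => //= x; lia. Qed.

Section Semantics.
Variable w : seq bool.
Hypothesis w_gt0 : 0 < size w.

Lemma teval_agree k a b t : endpoint k t -> agree k a b -> teval w b t = teval w a t.
Proof. by case: t => //= x /andP[xk _] ab; rewrite ab. Qed.

Lemma teval_upd_zvar k a l t :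
  endpoint k t -> teval w (upd a (zvar k.+1) l) t = teval w a t.
Proof.
case: t => //= x /andP[_ x2]; rewrite /upd ifN_eq //.
by apply: contra x2 => /eqP->; rewrite /zvar; lia.
Qed.

Definition stable k f := forall a b, agree k a b -> sat w b f <-> sat w a f.

Lemma sat_blocksS k f a : sat w a (blocks k.+1 f) <->
  exists i, 1 <= i <= size w /\ exists j, 1 <= j <= size w /\
  forall l, 1 <= l <= size w ->
    sat w (upd (upd (upd a (uvar k.+1) i) (vvar k.+1) j) (zvar k.+1) l) (blocks k f).
Proof. by []. Qed.

Lemma blocks_ext k f g a : (forall b, agree k a b -> sat w b f <-> sat w b g) ->
  sat w a (blocks k f) <-> sat w a (blocks k g).
Proof.
elim: k a => [|k IH] a fg; first exact: fg.
have E i j l := IH _ (fun b ab => fg b (agree_trans (agree_block k a i j l) (agreeS ab))).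
by rewrite !sat_blocksS; split=> -[i [ui [j [uj H]]]]; exists i; split=> //; exists j;
  split=> // l ul; apply/E/H.
Qed.

Lemma blocks_const k f a (P : Prop) : (forall b, agree k a b -> sat w b f <-> P) ->
  sat w a (blocks k f) <-> P.
Proof.
elim: k a => [|k IH] a fP; first exact: fP.
have E i j l := IH _ (fun b ab => fP b (agree_trans (agree_block k a i j l) (agreeS ab))).
have u1 : 1 <= 1 <= size w by rewrite leqnn.
rewrite sat_blocksS; split=> [[i [_ [j [_ H]]]] | HP]; first exact/(E i j 1)/H.
by exists 1; split=> //; exists 1; split=> // l _; apply/E.
Qed.

Lemma blocks_andl k c f a : stable k c ->
  sat w a (blocks k (FAnd c f)) <-> sat w a c /\ sat w a (blocks k f).
Proof.
move=> sc; have [ca | nca] := classic (sat w a c).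
  by rewrite (blocks_ext _ _ f); [tauto | move=> b /sc /=; tauto].
by rewrite (blocks_const _ _ _ False); [tauto | move=> b /sc /=; tauto].
Qed.

Lemma blocks_guards3 k a g1 g2 g3 f1 f2 f3 :
  stable k g1 -> stable k g2 -> stable k g3 ->
  ~ (sat w a g1 /\ sat w a g2) -> ~ (sat w a g1 /\ sat w a g3) ->
  ~ (sat w a g2 /\ sat w a g3) ->
  sat w a (blocks k (FAnd (FImp g1 f1) (FAnd (FImp g2 f2) (FImp g3 f3)))) <->
  (sat w a g1 -> sat w a (blocks k f1)) /\ (sat w a g2 -> sat w a (blocks k f2)) /\
  (sat w a g3 -> sat w a (blocks k f3)).
Proof.
move=> s1 s2 s3 n12 n13 n23.
have sg b : agree k a b ->
    [/\ sat w b g1 <-> sat w a g1, sat w b g2 <-> sat w a g2 & sat w b g3 <-> sat w a g3].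
  by move=> ab; split; [exact: s1 | exact: s2 | exact: s3].
have [a1 | na1] := classic (sat w a g1).
  by rewrite (blocks_ext _ _ f1); [tauto | move=> b /sg[] /=; tauto].
have [a2 | na2] := classic (sat w a g2).
  by rewrite (blocks_ext _ _ f2); [tauto | move=> b /sg[] /=; tauto].
have [a3 | na3] := classic (sat w a g3).
  by rewrite (blocks_ext _ _ f3); [tauto | move=> b /sg[] /=; tauto].
by rewrite (blocks_const _ _ _ True); [tauto | move=> b /sg[] /=; tauto].
Qed.

Definition ordb (s : seq bool) (x y : nat) : bool := if s is [::] then x == y else x < y.

Lemma ordb_leq s x y : ordb s x y -> x <= y.
Proof. by case: s => [/eqP->|_ _ /ltnW]. Qed.

Lemma sat_ord_fm a s p q : sat w a (ord_fm s p q) <-> ordb s (teval w a p) (teval w a q).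
Proof. by case: s => [|c s] /=; [split=> /eqP | ]. Qed.

Lemma sat_between_fm a z p q :
  sat w a (between_fm z p q) <-> teval w a p < a z <= teval w a q.
Proof. by rewrite /=; split=> [[lt ge] | /andP[lt le]]; [apply/andP | ]; split=> //; lia. Qed.

Lemma sat_letter_fm a c t : 1 <= teval w a t <= size w ->
  sat w a (letter_fm c t) <-> nth false w (teval w a t).-1 = c.
Proof.
case: c => tw /=; first tauto.
by split=> [nS | -> []//]; apply/negbTE/negP => S; apply: nS.
Qed.

Lemma stable_and k f g : stable k f -> stable k g -> stable k (FAnd f g).
Proof. by move=> sf sg a b ab /=; rewrite (sf _ _ ab) (sg _ _ ab). Qed.

Lemma stable_ord_fm k s p q : endpoint k p -> endpoint k q -> stable k (ord_fm s p q).
Proof. by move=> p_end q_end a b ab; rewrite !sat_ord_fm !(teval_agree _ _ _ _ _ ab). Qed.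

Lemma stable_between_fm k z p q : 3 * k + 3 <= z -> endpoint k p -> endpoint k q ->
  stable k (between_fm z p q).
Proof.
by move=> zk p_end q_end a b ab; rewrite !sat_between_fm !(teval_agree _ _ _ _ _ ab) ?ab.
Qed.

Lemma stable_letter_fm k c t : endpoint k t -> stable k (letter_fm c t).
Proof. by move=> et a b ab; case: c => /=; rewrite (teval_agree _ _ _ _ et ab). Qed.

Definition guarded_spells k := forall a t p q,
  endpoint k p -> endpoint k q -> size t <= 3 ^ k ->
  1 <= teval w a p -> teval w a q <= size w ->
  (ordb t (teval w a p) (teval w a q) /\
   forall l, teval w a p < l <= teval w a q ->
     sat w (upd a (zvar k.+1) l) (blocks k (spells_fm k t p q)))
  <-> spells w t (teval w a p) (teval w a q).

Section Step.
Variables (k : nat) (t : seq bool) (p q : term).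
Hypotheses (p_end : endpoint k.+1 p) (q_end : endpoint k.+1 q).
Local Notation t1 := (take (3 ^ k) t).
Local Notation t2 := (take (3 ^ k) (drop (3 ^ k) t)).
Local Notation t3 := (drop (3 ^ k + 3 ^ k) t).
Local Notation u := (TVar (uvar k.+1)).
Local Notation v := (TVar (vvar k.+1)).
Local Notation upd_uv a i j := (upd (upd a (uvar k.+1) i) (vvar k.+1) j).

Lemma endpoint_u : endpoint k u.
Proof. by rewrite /= /uvar; lia. Qed.

Lemma endpoint_v : endpoint k v.
Proof. by rewrite /= /vvar; lia. Qed.

Lemma sat_spells_fmS a i j l (x := teval w a p) (y := teval w a q)
    (b := upd (upd_uv a i j) (zvar k.+1) l) :
  sat w b (blocks k (spells_fm k.+1 t p q)) <->
  (ordb t1 x i /\ ordb t2 i j /\ ordb t3 j y) /\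
  (x < l <= i -> sat w b (blocks k (spells_fm k t1 p u))) /\
  (i < l <= j -> sat w b (blocks k (spells_fm k t2 u v))) /\
  (j < l <= y -> sat w b (blocks k (spells_fm k t3 v q))).
Proof.
have [bp bq] : teval w b p = x /\ teval w b q = y.
  rewrite /b !(teval_upd_zvar k _ l) ?(endpointS _ _ p_end) ?(endpointS _ _ q_end) //.
  by rewrite !(teval_agree _ _ _ _ _ (agree_uv k a i j)).
have [bu bv bz] : [/\ teval w b u = i, teval w b v = j & b (zvar k.+1) = l].
  by rewrite /= /b /upd !eqxx /uvar /vvar /zvar; split; do ?case: eqP; lia.
have [epk eqk] := (endpointS _ _ p_end, endpointS _ _ q_end).
have [eu ev] := (endpoint_u, endpoint_v).
have sb r r' : endpoint k r -> endpoint k r' -> stable k (between_fm (zvar k.+1) r r').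
  by apply: stable_between_fm; rewrite /zvar; lia.
rewrite [spells_fm k.+1 _ _ _]/= blocks_andl; last first.
  by do 2?apply: stable_and; apply: stable_ord_fm.
rewrite [sat w b (FAnd _ _)]/= !sat_ord_fm bp bq bu bv.
split=> -[O G]; split=> //; move: G; have ij : i <= j by case: O => _ [/ordb_leq].
all: rewrite blocks_guards3; try by apply: sb.
all: rewrite !sat_between_fm ?bp ?bq ?bu ?bv bz //; clear -ij; lia.
Qed.

Lemma size_pieces : size t <= 3 ^ k.+1 ->
  [/\ size t1 <= 3 ^ k, size t2 <= 3 ^ k & size t3 <= 3 ^ k].
Proof. by rewrite expnS => st; rewrite !size_take_min !size_drop; split; lia. Qed.

Hypothesis guarded_k : guarded_spells k.

Lemma sat_cuts_spells_fmS a i j (x := teval w a p) (y := teval w a q) :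
  size t <= 3 ^ k.+1 -> 1 <= x -> y <= size w -> 1 <= i <= size w -> 1 <= j <= size w ->
  (forall l, 1 <= l <= size w ->
     sat w (upd (upd_uv a i j) (zvar k.+1) l) (blocks k (spells_fm k.+1 t p q))) <->
  [/\ spells w t1 x i, spells w t2 i j & spells w t3 j y].
Proof.
move=> /size_pieces[s1 s2 s3] x1 yw ui uj; set a' := upd_uv a i j.
have [a'p a'q] : teval w a' p = x /\ teval w a' q = y.
  by rewrite !(teval_agree _ _ _ _ _ (agree_uv k a i j)).
have [a'u a'v] : teval w a' u = i /\ teval w a' v = j.
  by rewrite /= /a' /upd !eqxx /uvar /vvar; case: eqP; lia.
have [epk eqk] := (endpointS _ _ p_end, endpointS _ _ q_end).
have [[i1 iw] [j1 jw]] := (andP ui, andP uj).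
have G1 := guarded_k a' t1 p u epk endpoint_u s1.
have G2 := guarded_k a' t2 u v endpoint_u endpoint_v s2.
have G3 := guarded_k a' t3 v q endpoint_v eqk s3.
rewrite a'p a'q a'u a'v in G1 G2 G3.
move/(_ x1 iw) in G1; move/(_ i1 jw) in G2; move/(_ j1 yw) in G3.
split=> [H | [/G1[o1 H1] /G2[o2 H2] /G3[o3 H3]] l ul]; last first.
  by apply/sat_spells_fmS; split; [ | split; [exact: H1 | split; [exact: H2 | exact: H3]]].
have u1 : 1 <= 1 <= size w by rewrite leqnn.
have [[o1 [o2 o3]] _] := (sat_spells_fmS a i j 1).1 (H 1 u1).
have inU l lo hi : 1 <= lo -> hi <= size w -> lo < l <= hi -> 1 <= l <= size w.
  by clear; lia.
have Hl l (ul : 1 <= l <= size w) := ((sat_spells_fmS a i j l).1 (H l ul)).2.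
split; [apply/G1 | apply/G2 | apply/G3]; split=> // l bl.
- exact: (Hl l (inU _ _ _ x1 iw bl)).1.
- exact: (Hl l (inU _ _ _ i1 jw bl)).2.1.
- exact: (Hl l (inU _ _ _ j1 yw bl)).2.2.
Qed.

Lemma sat_blocks_spells_fmS a : size t <= 3 ^ k.+1 ->
  1 <= teval w a p -> teval w a q <= size w ->
  sat w a (blocks k.+1 (spells_fm k.+1 t p q)) <-> spells w t (teval w a p) (teval w a q).
Proof.
move=> st x1 yw; have tE : t1 ++ t2 ++ t3 = t.
  by rewrite -(drop_drop t (3 ^ k)) !cat_take_drop.
rewrite sat_blocksS -[X in spells w X _ _]tE.
split=> [[i [ui [j [uj /(sat_cuts_spells_fmS a i j st x1 yw ui uj)[sp1 sp2 sp3]]]]] | ].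
  by apply/spells_cat; exists i => //; apply/spells_cat; exists j.
case/spells_cat => i sp1 /spells_cat[j sp2 sp3].
have [[/andP[xi iw] _] [/andP[ij jw] _]] := (sp1, sp2).
have [ui uj] : 1 <= i <= size w /\ 1 <= j <= size w by lia.
by exists i; split=> //; exists j; split=> //; apply/sat_cuts_spells_fmS.
Qed.

End Step.

Lemma guarded_nil x y (P : nat -> Prop) : y <= size w ->
  (ordb [::] x y /\ forall l, x < l <= y -> P l) <-> spells w [::] x y.
Proof. by move=> yw; rewrite spells_nil /=; split=> [[/eqP] | [->]]; split=> // l; lia. Qed.

Lemma guarded_spells0 : guarded_spells 0.
Proof.
move=> a [|c [|? ?]] p q _ q_end st x1 yw //; first exact: guarded_nil.
rewrite (spells1 false) /=.
have qE l : teval w (upd a (zvar 1) l) q = teval w a q := teval_upd_zvar 0 a l q q_end.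
split=> [[xy H] | [yE yw' cE]].
  have [] := H (teval w a p).+1; first by rewrite leqnn xy.
  rewrite upd_same qE => yE; rewrite sat_letter_fm qE -yE /=; last by rewrite yE yw.
  by move=> <-; split=> //; rewrite yE.
split=> [|l xl]; first by rewrite yE.
rewrite upd_same qE sat_letter_fm qE yE //=; last by rewrite -yE yw'.
by split=> //; lia.
Qed.

Lemma guarded_spellsS k : guarded_spells k -> guarded_spells k.+1.
Proof.
move=> gk a [|c t] p q p_end q_end st x1 yw; first exact: guarded_nil.
have E l : sat w (upd a (zvar k.+2) l) (blocks k.+1 (spells_fm k.+1 (c :: t) p q)) <->
           spells w (c :: t) (teval w a p) (teval w a q).
  by rewrite sat_blocks_spells_fmS ?teval_upd_zvar.
split=> [[xy H] | sp]; first by apply/(E (teval w a q))/H; rewrite leqnn andbT.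
by split=> [|l _]; [rewrite /= -(size_spells sp) /= addnS ltnS leq_addr | apply/E].
Qed.

Lemma guarded_spells_all k : guarded_spells k.
Proof. by elim: k => [|k]; [exact: guarded_spells0 | exact: guarded_spellsS]. Qed.

Lemma sat_blocks_spells_fm k a t p q : endpoint k p -> endpoint k q -> size t < 3 ^ k ->
  1 <= teval w a p -> teval w a q <= size w ->
  sat w a (blocks k (spells_fm k t p q)) <-> spells w t (teval w a p) (teval w a q).
Proof.
case: k => [|k] p_end q_end st x1 yw.
  by case: t st => // _; rewrite spells_nil; split=> [-> | []].
by apply: sat_blocks_spells_fmS => //; [exact: guarded_spells_all | exact: ltnW].
Qed.

End Semantics.

Lemma sentence_word_fm k w : size w <= 3 ^ k -> sentence (word_fm k w).
Proof.
move=> wk; have kE : maxn k (behead w != [::]) = k.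
  case: k wk => [|k] wk; first by case: w wk => [|? []].
  by apply/maxn_idPl; apply: leq_trans (leq_b1 _) _.
have bound : all (bound_var k) (fv (spells_fm k (behead w) TMin TMax)).
  by apply: fv_spells_fm => // y; rewrite kE.
rewrite /sentence /word_fm fv_blocks (@eq_in_filter _ _ pred0) ?filter_pred0 // => y.
by rewrite [fv _]/= fv_letter_fm /= => /(allP bound) ->.
Qed.

Lemma holds_word_fm k w w' : 0 < size w -> size w <= 3 ^ k -> size w' = size w ->
  holds w' (word_fm k w) <-> w' = w.
Proof.
move=> w_gt0 wk w'w; have w'_gt0 : 0 < size w' by rewrite w'w.
rewrite /holds /word_fm blocks_andl //; last exact: stable_letter_fm.
rewrite sat_letter_fm ?w'_gt0 // sat_blocks_spells_fm //=; last by rewrite size_behead; lia.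
rewrite spells_behead //.
case: w' w'_gt0 w'w => // c' s' _; case: w w_gt0 {wk} => // c s _ /= _.
by split=> [[-> ->] | [-> ->]].
Qed.

Theorem mainTheorem9 :
  forall (n : nat) (w : seq bool), 1 <= n -> size w = n ->
  exists phi : formula,
    sentence phi /\ prenex phi /\
    qcount phi = 3 * ceil_log3 n /\
    qprefix phi = flatten (nseq (ceil_log3 n) [:: QEx; QEx; QAll]) /\
    holds w phi /\
    (forall w' : seq bool, size w' = n -> w' <> w -> ~ holds w' phi).
Proof.
move=> n w n_gt0 wn; set k := ceil_log3 n.
have wk : size w <= 3 ^ k by rewrite wn; apply: up_logP.
have qfree_matrix :
    qcount (FAnd (letter_fm (head false w) TMin) (spells_fm k (behead w) TMin TMax)) = 0.
  by rewrite /= qcount_letter_fm qcount_spells_fm.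
exists (word_fm k w); split; first exact: sentence_word_fm.
split; first by rewrite /prenex /qfree matrix_blocks.
split; first by rewrite qcount_blocks qfree_matrix addn0.
split; first by rewrite qprefix_blocks cats0.
have w_gt0 : 0 < size w by rewrite wn.
split; first exact/holds_word_fm.
by move=> w' w'n; rewrite holds_word_fm ?w'n.
Qed.
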